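(* Let $n\ge 1$ and $1\le r\le n$. Then for every integer $z$ (equivalently, as a polynomial identity in $z$), $$ \alpha(n;k_1,\ldots,k_{r-1},k_{r}+z,k_{r+1},\ldots,k_n) = \sum_{p=0}^{\infty} (-1)^p \binom{n-1-p+z}{n-1} e_p(E_{k_1},\ldots,\widehat{E_{k_r}},\ldots,E_{k_n}) \, \alpha(n;k_1,\ldots,k_n), $$ where $\widehat{E_{k_r}}$ indicates that $E_{k_r}$ is omitted.
   Context: $E_x$ denotes the shift operator $E_x p(x)=p(x+1)$ acting on polynomials in the variables $k_1,\ldots,k_n$, and $\mathrm{id}$ is the identity. $\alpha(n;k_1,\ldots,k_n)$ is the polynomial $$\alpha(n;k_1,\ldots,k_n)=\prod_{1\le p<q\le n}(\mathrm{id}-E_{k_p}+E_{k_p}E_{k_q})\prod_{1\le i<j\le n}\frac{k_j-k_i}{j-i}$$ (for strictly increasing integers $k_1<\dots<k_n$ it counts monotone triangles with bottom row $(k_1,\ldots,k_n)$). $e_p$ denotes the $p$-th elementary symmetric function ($e_0=1$, $e_p=0$ for $p$ larger than the number of arguments), here evaluated at commuting shift operators. $\binom{x}{m}=x(x-1)\cdots(x-m+1)/m!$. *)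

From mathcomp Require Import all_boot all_order all_algebra.
Unset Printing Implicit Defensive.
Import Order.TTheory GRing.Theory Num.Theory.
Local Open Scope ring_scope.

(* Functions on integer points Z^n with rational values.  Polynomials in
   k_1..k_n are identified with the functions they induce on Z^n
   (a polynomial is determined by its values there). *)
Definition fn (n : nat) := ('I_n -> int) -> rat.
Definition op (n : nat) := fn n -> fn n.

Definition shift {n} (i : 'I_n) : op n :=
  fun f k => f (fun j => if j == i then k j + 1 else k j).

Definition opprod {n} (s : seq (op n)) : op n :=
  foldr (fun T acc => fun f => T (acc f)) (fun f => f) s.

Definition alpha_factor {n} (p q : 'I_n) : op n :=
  fun f k => f k - shift p f k + shift p (shift q f) k.

Definition vandermonde n : fn n :=
  fun k => \prod_(i < n) \prod_(j < n | (i < j)%N)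
             ((k j - k i)%:~R / (j - i)%:R).

Definition alpha_pairs n : seq ('I_n * 'I_n) :=
  [seq pq : 'I_n * 'I_n <- [seq (p, q) | p <- enum 'I_n, q <- enum 'I_n] | (pq.1 < pq.2)%N].

Definition alpha n : fn n :=
  opprod [seq alpha_factor pq.1 pq.2 | pq : 'I_n * 'I_n <- alpha_pairs n] (vandermonde n).

Definition esym_shift_omit {n} (r : 'I_n) (p : nat) : op n :=
  fun f k => \sum_(S : {set 'I_n} | (r \notin S) && (#|S| == p))
               opprod [seq shift i | i <- enum S] f k.

Definition gbinom (x : rat) (m : nat) : rat :=
  (\prod_(i < m) (x - i%:R)) / (m`!)%:R.

From mathcomp Require Import all_boot all_order all_algebra.
From mathcomp Require Import perm ring zify.
From Stdlib Require Import FunctionalExtensionality.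
Import Order.TTheory GRing.Theory Num.Theory.
Local Open Scope ring_scope.

(* Write [b_p] for [e_p(E_{k_i}, i <> r) alpha].  Since
   [e_{p+1}(E_{k_1},...,E_{k_n}) = e_{p+1}(omit r) + E_{k_r} e_p(omit r)],
   everything follows from the identity [e_p(E_{k_1},...,E_{k_n}) alpha = C(n,p) alpha].
   It holds for the Vandermonde product, which is [det M] with [M = (binom(k_i, j))]:
   shifting the rows in a set [S] and summing with weight [X^|S|] gives
   [det (M + X M')] with [M' = (binom(k_i + 1, j))], and Pascal's rule factors
   [M + X M'] as [M] times a bidiagonal matrix of determinant [(1 + X)^n].  The
   identity then survives each factor [id - E_p + E_p E_q] of [alpha], since these
   commute with shifts.  Hence [E_{k_r} b_p = C(n,p+1) alpha - b_{p+1}], and a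
   binomial identity shows that the right-hand side [T z] of the formula satisfies
   [T (z + 1) = E_{k_r} (T z)], while [T 0 = alpha]. *)

Definition falling (x : rat) (m : nat) : rat := \prod_(i < m) (x - i%:R).

Lemma fallingSr x m : falling x m.+1 = falling x m * (x - m%:R).
Proof. by rewrite /falling big_ord_recr. Qed.

Lemma fallingS1 x m : falling (x + 1) m.+1 = (x + 1) * falling x m.
Proof.
rewrite /falling big_ord_recl subr0; congr (_ * _).
by apply: eq_bigr => i _; rewrite lift0 -natr1; ring.
Qed.

Lemma falling_nn m : falling m%:R m = m`!%:R.
Proof.
elim: m => [|m IH]; first by rewrite /falling big_ord0.
by rewrite -natr1 fallingS1 IH natr1 factS natrM.
Qed.

Lemma fact_neq0 m : m`!%:R != 0 :> rat.
Proof. by rewrite pnatr_eq0 -lt0n fact_gt0. Qed.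

Lemma gbinomE x m : gbinom x m = falling x m / m`!%:R.
Proof. by []. Qed.

Lemma gbinom0 x : gbinom x 0 = 1.
Proof. by rewrite /gbinom big_ord0 fact0 divr1. Qed.

Lemma gbinomS x m : gbinom (x + 1) m.+1 = gbinom x m.+1 + gbinom x m.
Proof.
rewrite !gbinomE fallingS1 fallingSr factS natrM.
have m1_neq0 : m.+1%:R != 0 :> rat by rewrite pnatr_eq0.
rewrite -natr1 in m1_neq0 *.
by field; rewrite fact_neq0 m1_neq0.
Qed.

Lemma gbinom_small (t m : nat) : (t < m)%N -> gbinom t%:R m = 0.
Proof. by move=> ltm; rewrite /gbinom (bigD1 (Ordinal ltm)) //= subrr !mul0r. Qed.

Lemma gbinom_nn m : gbinom m%:R m = 1.
Proof. by rewrite gbinomE falling_nn divff // fact_neq0. Qed.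

Lemma alt_binom_sumS N (g : nat -> rat) :
  \sum_(p < N.+2) (-1) ^+ p * 'C(N.+1, p)%:R * g p =
  \sum_(p < N.+1) (-1) ^+ p * 'C(N, p)%:R * (g p - g p.+1).
Proof.
rewrite big_ord_recl /= bin0 expr0 mul1r.
under eq_bigr => i _ do rewrite /bump /= binS natrD mulrDr mulrDl.
rewrite big_split /=.
under [RHS]eq_bigr => i _ do rewrite mulrBr.
rewrite sumrB [in RHS]big_ord_recl [X in _ + (X + _) = _]big_ord_recr /=.
rewrite bin_small // mulr0 mul0r addr0 bin0 expr0 !mul1r -addrA.
congr (_ + (_ + _)).
by rewrite -sumrN; apply: eq_bigr => i _; rewrite exprS; ring.
Qed.

(* The [N]-th finite difference kills polynomials of degree [m < N]. *)
Lemma alt_binom_sum_gbinom N m y : (m < N)%N ->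
  \sum_(p < N.+1) (-1) ^+ p * 'C(N, p)%:R * gbinom (y - p%:R) m = 0.
Proof.
elim: N m y => [|N IH] m y // ltm.
rewrite (alt_binom_sumS N (fun p => gbinom (y - p%:R) m)).
case: m ltm => [|m] ltm.
  by apply: big1 => i _; rewrite !gbinom0 subrr mulr0.
rewrite -[RHS](IH m (y - 1)) //; apply: eq_bigr => i _; congr (_ * _).
have -> : y - i%:R = (y - 1 - i%:R) + 1 by ring.
by rewrite gbinomS -natr1 (_ : y - (i%:R + 1) = y - 1 - i%:R); ring.
Qed.

Definition shift_coef (n p : nat) (z : int) : rat :=
  (-1) ^+ p * gbinom ((n%:Z - 1 - p%:Z + z)%:~R) n.-1.

Lemma shift_coef_binom_sum n z : (1 <= n)%N ->
  \sum_(p < n.+1) shift_coef n p z * 'C(n, p.+1)%:R = shift_coef n 0 (z + 1).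
Proof.
move=> n_gt0.
have := @alt_binom_sum_gbinom n n.-1 ((n%:Z + z)%:~R).
rewrite prednK // => /(_ (leqnn n)).
rewrite big_ord_recl /= bin0 expr0 !mul1r subr0 => /eqP; rewrite addr_eq0 => /eqP E.
rewrite big_ord_recr /= bin_small // mulr0 addr0 /shift_coef expr0 mul1r.
rewrite (_ : (n%:Z - 1 - 0%:Z + (z + 1)) = n%:Z + z); last by ring.
rewrite E -sumrN; apply: eq_bigr => i _; rewrite /bump /= exprS.
have -> : ((n%:Z - 1 - i%:Z + z)%:~R : rat) = (n%:Z + z)%:~R - (1 + i)%:R.
  by rewrite !(intrD, intrB) natrD; ring.
ring.
Qed.

Definition shift_pt {n} (k : 'I_n -> int) (i : 'I_n) (c : int) : 'I_n -> int :=
  fun j => if j == i then k j + c else k j.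

Definition shift_set {n} (k : 'I_n -> int) (S : {set 'I_n}) : 'I_n -> int :=
  fun j => if j \in S then k j + 1 else k j.

Lemma shiftE n (i : 'I_n) (g : fn n) k : shift i g k = g (shift_pt k i 1).
Proof. by []. Qed.

Lemma shift_pt0 n (k : 'I_n -> int) i : shift_pt k i 0 = k.
Proof. by apply: functional_extensionality => j; rewrite /shift_pt addr0 if_same. Qed.

Lemma shift_ptD n (k : 'I_n -> int) i c d :
  shift_pt (shift_pt k i c) i d = shift_pt k i (c + d).
Proof.
by apply: functional_extensionality => j; rewrite /shift_pt; case: (j == i); rewrite // addrA.
Qed.

Lemma shift_pt_set n (k : 'I_n -> int) S i c :
  shift_pt (shift_set k S) i c = shift_set (shift_pt k i c) S.
Proof.
apply: functional_extensionality => j; rewrite /shift_pt /shift_set.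
by case: (j == i); case: (j \in S); rewrite // addrAC.
Qed.

Lemma opprod_shiftE n (s : seq 'I_n) (f : fn n) k :
  opprod [seq shift i | i <- s] f k = f (fun j => k j + (count_mem j s)%:Z).
Proof.
elim: s k => [|i s IH] k /=.
  by congr f; apply: functional_extensionality => j; rewrite addr0.
rewrite /shift IH; congr f; apply: functional_extensionality => j.
case: (eqVneq j i) => [->|ne] /=; last by rewrite add0n.
by rewrite add1n -addn1 PoszD addrAC addrA.
Qed.

Lemma esym_shift_omitE n r p (f : fn n) k :
  esym_shift_omit r p f k =
  \sum_(S : {set 'I_n} | (r \notin S) && (#|S| == p)) f (shift_set k S).
Proof.
apply: eq_bigr => S _; rewrite opprod_shiftE; congr f.
apply: functional_extensionality => j.
by rewrite count_uniq_mem ?enum_uniq // mem_enum /shift_set; case: (j \in S); rewrite ?addr0.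
Qed.

Definition esym_shift_binomial {n} (g : fn n) := forall k (p : nat),
  \sum_(S : {set 'I_n} | #|S| == p) g (shift_set k S) = 'C(n, p)%:R * g k.

Lemma esym_shift_binomial_factor n (p q : 'I_n) (g : fn n) :
  esym_shift_binomial g -> esym_shift_binomial (alpha_factor p q g).
Proof.
move=> Hg k m; rewrite /alpha_factor.
under eq_bigr => S _ do rewrite !shiftE !shift_pt_set.
by rewrite big_split /= sumrB !Hg !shiftE; ring.
Qed.

Lemma esym_shift_binomial_alpha {n} :
  esym_shift_binomial (vandermonde n) -> esym_shift_binomial (alpha n).
Proof.
move=> HV; rewrite /alpha; elim: (alpha_pairs n) => [|pq l IH] //=.
exact: esym_shift_binomial_factor.
Qed.

Definition binom_mx {n} (k : 'I_n -> int) : 'M[rat]_n :=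
  \matrix_(i, j) gbinom (k i)%:~R j.

Definition binom_pencil {n} (k : 'I_n -> int) : 'M[{poly rat}]_n :=
  \matrix_(i, j) ((binom_mx k i j)%:P + 'X * (gbinom (k i + 1)%:~R j)%:P).

Definition pascal_bidiag n : 'M[{poly rat}]_n :=
  \matrix_(l, j) (if l == j then 1 + 'X else if (l.+1 == j)%N then 'X else 0).

Lemma det_binom_pencil_expand n (k : 'I_n -> int) :
  \det (binom_pencil k) =
  \sum_(S : {set 'I_n}) 'X^#|S| * (\det (binom_mx (shift_set k S)))%:P.
Proof.
rewrite [LHS]/determinant.
transitivity (\sum_(s : 'S_n) (-1) ^+ s * \sum_(S : {set 'I_n})
   \prod_i (if i \in S then 'X * (gbinom (k i + 1)%:~R (s i))%:P
            else (binom_mx k i (s i))%:P)).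
  apply: eq_bigr => s _; congr (_ * _).
  under eq_bigr => i _ do rewrite mxE addrC.
  exact: bigA_distr.
under eq_bigr => s _ do rewrite mulr_sumr.
rewrite exchange_big /=; apply: eq_bigr => S _.
rewrite /determinant rmorph_sum mulr_sumr; apply: eq_bigr => s _.
rewrite rmorphM rmorph_sign rmorph_prod /=.
rewrite (eq_bigr (fun i => (if i \in S then 'X else 1) *
                           (binom_mx (shift_set k S) i (s i))%:P)); last first.
  by move=> i _; rewrite !mxE /shift_set; case: (i \in S); rewrite ?mul1r.
by rewrite big_split /= -big_mkcond prodr_const mulrCA.
Qed.

(* Pascal's rule [binom(x+1, j) = binom(x, j) + binom(x, j-1)] on each entry. *)
Lemma binom_pencilE n (k : 'I_n -> int) :
  binom_pencil k = map_mx polyC (binom_mx k) *m pascal_bidiag n.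
Proof.
apply/matrixP => i j; rewrite !mxE.
have bidiagE l : (binom_mx k i l)%:P * pascal_bidiag n l j =
    (binom_mx k i l)%:P * ((l == j)%:R * (1 + 'X))
    + 'X * ((binom_mx k i l)%:P * ((l.+1 == j)%N)%:R).
  rewrite !mxE; case: (eqVneq l j) => [->|_] /=; first by rewrite gtn_eqF //=; ring.
  by case: (l.+1 == j)%N => /=; ring.
under [RHS]eq_bigr => l _ do rewrite mxE bidiagE.
rewrite big_split /= -mulr_sumr (bigD1 j) //= eqxx big1 ?addr0; last first.
  by move=> l /negbTE ->; rewrite mul0r mulr0.
rewrite !mxE intrD.
case: (posnP j) => [j0|j_gt0].
  rewrite big1 => [|l _]; last by rewrite j0 mulr0.
  by rewrite j0 !gbinom0 polyC1 mulr0 addr0 /=; ring.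
have j'_lt : (j.-1 < n)%N by rewrite (leq_ltn_trans (leq_pred j)).
rewrite (bigD1 (Ordinal j'_lt)) //= prednK // eqxx mulr1 big1 ?addr0; last first.
  move=> l ne; rewrite (_ : (l.+1 == j)%N = false) ?mulr0 //.
  apply: contraNF ne => /eqP lj; apply/eqP/val_inj; by rewrite /= -lj.
rewrite mxE /= -[X in gbinom (_ + _) X](prednK j_gt0) gbinomS prednK //.
by rewrite polyCD; ring.
Qed.

Lemma det_pascal_bidiag n : \det (pascal_bidiag n) = (1 + 'X) ^+ n.
Proof.
rewrite -det_tr det_trig; last first.
  apply/is_trig_mxP => i j lt; rewrite !mxE.
  rewrite (_ : (j == i) = false); last by apply: contraTF lt => /eqP ->; rewrite ltnn.
  by rewrite gtn_eqF // ltnS ltnW.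
under eq_bigr => i _ do rewrite !mxE eqxx.
by rewrite prodr_const card_ord.
Qed.

Lemma coef_1addX_exp n p : ((1 + 'X : {poly rat}) ^+ n)`_p = 'C(n, p)%:R.
Proof.
rewrite exprDn coef_sum.
under eq_bigr => i _ do rewrite expr1n mul1r coefMn coefXn.
case: (ltnP p n.+1) => hp.
  rewrite (bigD1 (Ordinal hp)) //= eqxx mulr1n big1 ?addr0 // => i ne.
  rewrite (_ : (p == i) = false) ?mul0rn //.
  by apply: contraNF ne => /eqP pi; apply/eqP/val_inj; rewrite /= pi.
rewrite bin_small // big1 // => i _.
by rewrite gtn_eqF ?mul0rn // (leq_trans (ltn_ord i) hp).
Qed.

Lemma esym_shift_binomial_det n :
  esym_shift_binomial (fun k : 'I_n -> int => \det (binom_mx k)).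
Proof.
move=> k p.
have genfun : \sum_(S : {set 'I_n}) 'X^#|S| * (\det (binom_mx (shift_set k S)))%:P
              = (1 + 'X) ^+ n * (\det (binom_mx k))%:P.
  rewrite -det_binom_pencil_expand binom_pencilE det_mulmx det_map_mx.
  by rewrite det_pascal_bidiag mulrC.
have := congr1 (fun q : {poly rat} => q`_p) genfun.
rewrite /= coefMC coef_1addX_exp coef_sum => <-.
rewrite big_mkcond /=; apply: eq_bigr => S _.
rewrite coefXnM coefC.
case: (ltnP p #|S|) => [ltpS|leSp]; first by rewrite gtn_eqF.
by rewrite subn_eq0 eqn_leq leSp.
Qed.

Definition falling_poly (j : nat) : {poly rat} := \prod_(0 <= i < j) ('X - (i%:R)%:P).

Lemma size_falling_poly j : size (falling_poly j) = j.+1.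
Proof. by rewrite size_prod_XsubC /index_iota subn0 size_iota. Qed.

Lemma monic_falling_poly j : falling_poly j \is monic.
Proof. exact: monic_prod_XsubC. Qed.

Lemma horner_falling_poly j x : (falling_poly j).[x] = falling x j.
Proof. by rewrite horner_prod big_mkord; apply: eq_bigr => i _; rewrite hornerXsubC. Qed.

Lemma prod_subn_fact j : (\prod_(i < j) (j - i))%N = j`!.
Proof.
elim: j => [|j IH]; first by rewrite big_ord0.
by rewrite big_ord_recl subn0 factS -IH.
Qed.

Lemma prod_pairs_subn n :
  \prod_(i < n) \prod_(j < n | (i < j)%N) ((j - i)%N%:R : rat) =
  \prod_(j < n) (j`!)%:R.
Proof.
rewrite (exchange_big_dep xpredT) //=; apply: eq_bigr => j _.
rewrite -natr_prod -prod_subn_fact; congr (_%:R).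
by rewrite (big_ord_widen_cond n xpredT (fun i => (j - i)%N)) // ltnW.
Qed.

(* The columns of [binom_mx k] are, up to [j!], monic polynomials of degree [j]
   evaluated at the [k i]: a unitriangular change of basis from the powers. *)
Lemma vandermonde_det_binom_mx n (k : 'I_n -> int) :
  vandermonde n k = \det (binom_mx k).
Proof.
pose x : 'rV[rat]_n := \row_j ((k j)%:~R : rat).
pose C : 'M[rat]_n := \matrix_(l, j) (falling_poly j)`_l.
pose facts : 'rV[rat]_n := \row_j ((j`!)%:R : rat).
have factorE : (Vandermonde n x)^T *m C = binom_mx k *m diag_mx facts.
  apply/matrixP => i j; rewrite mul_mx_diag !mxE.
  have sz : (size (falling_poly j) <= n)%N by rewrite size_falling_poly.
  transitivity ((falling_poly j).[(k i)%:~R]).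
    by rewrite (horner_coef_wide _ sz); apply: eq_bigr => l _; rewrite !mxE mulrC.
  by rewrite horner_falling_poly /gbinom divfK // fact_neq0.
have detC : \det C = 1.
  rewrite -det_tr det_trig; last first.
    by apply/is_trig_mxP => i j lt; rewrite !mxE nth_default // size_falling_poly.
  apply: big1 => i _; rewrite !mxE.
  rewrite -[X in _`_X]/(i.+1.-1) -(size_falling_poly i) -lead_coefE.
  exact: monicP (monic_falling_poly i).
have facts_neq0 : \prod_(j < n) facts 0 j != 0.
  by rewrite prodf_seq_neq0; apply/allP => j _; rewrite mxE fact_neq0.
move/(congr1 determinant): factorE.
rewrite !det_mulmx det_tr detC mulr1 det_diag det_Vandermonde => detE.
apply: (mulIf facts_neq0); rewrite -detE.
under [X in _ * X = _]eq_bigr => j _ do rewrite mxE.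
rewrite -prod_pairs_subn /vandermonde -big_split /=; apply: eq_bigr => i _.
rewrite -big_split /=; apply: eq_bigr => j lt.
by rewrite !mxE intrB divfK // pnatr_eq0 subn_eq0 -ltnNge.
Qed.

Lemma esym_shift_binomial_vandermonde n : esym_shift_binomial (vandermonde n).
Proof.
move=> k p; rewrite vandermonde_det_binom_mx -(@esym_shift_binomial_det n k p).
by apply: eq_bigr => S _; rewrite vandermonde_det_binom_mx.
Qed.

Lemma esym_shift_omit0 n (r : 'I_n) (f : fn n) k : esym_shift_omit r 0 f k = f k.
Proof.
rewrite esym_shift_omitE (big_pred1 set0) => [|S].
  by congr f; apply: functional_extensionality => j; rewrite /shift_set in_set0.
by rewrite /= cards_eq0; case: eqP => [->|]; rewrite ?in_set0 ?andbF.
Qed.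

Lemma esym_shift_omit_large n (r : 'I_n) (f : fn n) p k :
  (n <= p)%N -> esym_shift_omit r p f k = 0.
Proof.
move=> le_np; rewrite esym_shift_omitE big_pred0 // => S.
apply/negbTE/andP => -[rS /eqP cardS].
have : S \proper [set: 'I_n] by rewrite properT; apply: contraNneq rS => ->; rewrite inE.
by move/proper_card; rewrite cardsT card_ord cardS ltnNge le_np.
Qed.

Section ShiftFormula.
Variables (n : nat) (r : 'I_n) (g : fn n).
Hypothesis g_binomial : esym_shift_binomial g.

Let b p := esym_shift_omit r p g.

Let n_gt0 : (0 < n)%N := leq_ltn_trans (leq0n r) (ltn_ord r).

(* [e_{p+1}(E_{k_1},...,E_{k_n}) = e_{p+1}(omit r) + E_{k_r} e_p(omit r)],
   splitting the subsets according to whether they contain [r]. *)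
Lemma esym_shift_omit_rec p k :
  b p.+1 k + b p (shift_pt k r 1) = 'C(n, p.+1)%:R * g k.
Proof.
rewrite -(g_binomial k p.+1) (bigID (fun S : {set 'I_n} => r \in S)) /= addrC.
congr (_ + _); rewrite /b esym_shift_omitE; first by apply: eq_bigl => S; rewrite andbC.
rewrite [RHS](reindex_onto (fun S' => r |: S') (fun S => S :\ r)) /=; last first.
  by move=> S /andP [_ rS]; rewrite setD1K.
apply: eq_big => S'.
  case: (boolP (r \in S')) => rS' /=.
    by rewrite (_ : (r |: S') :\ r == S' = false) ?andbF //; apply: contraTF rS' => /eqP <-; rewrite !inE eqxx.
  by rewrite setU1K // cardsU1 rS' add1n eqSS setU11 eqxx !andbT.
move=> /andP [rS' _]; congr g; apply: functional_extensionality => j.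
rewrite /shift_set /shift_pt in_setU1; case: (eqVneq j r) => [->|] /=.
  by rewrite (negbTE rS').
by case: (j \in S').
Qed.

Let T (z : int) k := \sum_(p < n.+1) shift_coef n p z * b p k.

Lemma shift_formula_step z k : T (z + 1) k = T z (shift_pt k r 1).
Proof.
have b_shift p : b p (shift_pt k r 1) = 'C(n, p.+1)%:R * g k - b p.+1 k.
  by rewrite -esym_shift_omit_rec; ring.
rewrite /T; under [RHS]eq_bigr => p _ do rewrite b_shift mulrBr mulrA.
rewrite sumrB -mulr_suml shift_coef_binom_sum //.
rewrite big_ord_recl /b esym_shift_omit0 [X in _ = _ - X]big_ord_recr /=.
rewrite esym_shift_omit_large // mulr0 addr0 -sumrN; congr (_ + _).
apply: eq_bigr => i _; rewrite /bump /= /shift_coef exprS.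
rewrite (_ : n%:Z - 1 - (1 + i)%N%:Z + (z + 1) = n%:Z - 1 - i%:Z + z); last first.
  by rewrite PoszD; ring.
ring.
Qed.

Lemma shift_formula0 k : T 0 k = g k.
Proof.
rewrite /T big_ord_recl /b esym_shift_omit0 /shift_coef expr0 mul1r.
rewrite (_ : n%:Z - 1 - 0%:Z + 0 = n.-1) ?gbinom_nn ?mul1r; last by lia.
rewrite big1 ?addr0 // => i _; rewrite /bump /=.
case: (ltnP i.+1 n) => [lt_in|le_ni]; last by rewrite esym_shift_omit_large ?mulr0.
rewrite (_ : n%:Z - 1 - (1 + i)%N%:Z + 0 = (n.-1 - i.+1)%N); last by lia.
by rewrite gbinom_small ?mulr0 ?mul0r //; lia.
Qed.

Lemma shift_formula z k : g (shift_pt k r z) = T z k.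
Proof.
have pos (m : nat) k' : g (shift_pt k' r m%:Z) = T m%:Z k'.
  elim: m k' => [|m IH] k'; first by rewrite shift_pt0 shift_formula0.
  by rewrite -add1n PoszD -shift_ptD IH -shift_formula_step addrC.
have neg (m : nat) k' : g (shift_pt k' r (- m%:Z)) = T (- m%:Z) k'.
  elim: m k' => [|m IH] k'; first by rewrite oppr0 shift_pt0 shift_formula0.
  have := shift_formula_step (- m.+1%:Z) (shift_pt k' r (-1)).
  rewrite shift_ptD addNr shift_pt0 => <-.
  rewrite (_ : - m.+1%:Z + 1 = - m%:Z); last by rewrite -addn1 PoszD; ring.
  rewrite -IH shift_ptD; congr (g (shift_pt _ _ _)); rewrite -addn1 PoszD; ring.
by case: z => m; rewrite ?NegzE; [apply: pos | apply: neg].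
Qed.

End ShiftFormula.

(* The hypothesis [1 <= n] is implied by the existence of [r : 'I_n]. *)
Theorem lemma1 (n : nat) (hn : (1 <= n)%N) (r : 'I_n) (z : int)
    (k : 'I_n -> int) :
  alpha n (fun j => if j == r then k j + z else k j) =
  \sum_(p < n.+1)
    (-1) ^+ p * gbinom ((n%:Z - 1 - p%:Z + z)%:~R) n.-1
      * esym_shift_omit r p (alpha n) k.
Proof.
have alpha_binomial := esym_shift_binomial_alpha (esym_shift_binomial_vandermonde n).
exact: shift_formula n r (alpha n) alpha_binomial z k.
Qed.
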